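(* Let $O$ be a random vector containing $Z$, let $S_{ab}$ be a known function of $O$, and let $h\mapsto m_a(O,h)$ be a map that is linear a.s. on $L_2(P_{Z})$ with $h\mapsto E[m_a(O,h)]$ continuous. Assume there is a linear map $h\mapsto m_a^\ddagger(o,h)$ on $L_2(P_Z)$ such that $h\mapsto E[m_a^\ddagger(O,h)]$ is continuous with Riesz representer $\mathcal R_a^\ddagger(Z)$, $|m_a(o,h)|\le m_a^\ddagger(o,|h|)$ for all $o$ and all $h\in L_2(P_Z)$, and $E[(\mathcal R_a^\ddagger)^2]\le K$. Assume $a\in\mathcal G_n(\phi,s_a,2,\varphi)$ with associated parameter $\theta_a^*$, where $s_a\log(p)/\sqrt n\to0$, and let $r(Z)=a(Z)-\varphi(\langle\theta^*_a,\phi(Z)\rangle)$. Let $h$ be such that $E[(S_{ab}h)^2]\le K$. Then $\sqrt n\,E\big[|S_{ab}h\,r+m_a(O,r)|\big]\to0$.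
   Context: Asymptotics are in $n$ and all quantities may depend on $n$; $K$ is a fixed positive constant. $\phi(Z)=(\phi_1(Z),\dots,\phi_p(Z))^\top$, $p=p(n)$. $\mathcal G_n(\phi,s,j,\varphi)$ is the set of functions $c(Z)$ for which there exist $\theta^*\in\mathbb R^p$ with $\|\theta^*\|_0\le s$ and $r(Z)$ with $c(Z)=\varphi(\langle\theta^*,\phi(Z)\rangle)+r(Z)$ and $E[r(Z)^2]\le K(s\log(p)/n)^j$; $\theta^*$ is the associated parameter. *)

From HB Require Import structures.
From mathcomp Require Import all_boot all_order all_algebra.
From mathcomp Require Import all_classical all_reals all_analysis.
Set Implicit Arguments. Unset Strict Implicit. Unset Printing Implicit Defensive.
Import Order.TTheory GRing.Theory Num.Theory numFieldNormedType.Exports.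
Local Open Scope classical_set_scope.
Local Open Scope ring_scope.

Section defs.
Context {d : measure_display} {T : measurableType d} {R : realType} {ZT : Type}.
(* T : sample space of O, P : law of O, Z : the component Z of O. *)
Variables (P : probability T R) (Z : T -> ZT).

Definition L2Z (h : ZT -> R) : Prop :=
  measurable_fun setT (h \o Z) /\ (\int[P]_x ((h (Z x)) ^+ 2)%:E < +oo)%E.

Definition linear_as (m : T -> (ZT -> R) -> R) : Prop :=
  forall (h1 h2 : ZT -> R) (c : R), L2Z h1 -> L2Z h2 ->
    {ae P, forall x, m x (fun z => h1 z + h2 z) = m x h1 + m x h2} /\
    {ae P, forall x, m x (fun z => c * h1 z) = c * m x h1}.

Definition linear_pw (m : T -> (ZT -> R) -> R) : Prop :=
  forall (x : T) (h1 h2 : ZT -> R) (c : R), L2Z h1 -> L2Z h2 ->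
    m x (fun z => h1 z + h2 z) = m x h1 + m x h2 /\
    m x (fun z => c * h1 z) = c * m x h1.

Definition mean_defined (m : T -> (ZT -> R) -> R) : Prop :=
  forall h, L2Z h -> P.-integrable setT (fun x => (m x h)%:E).

Definition mean_continuous (m : T -> (ZT -> R) -> R) : Prop :=
  mean_defined m /\
  forall (h : ZT -> R) (hk : nat -> ZT -> R), L2Z h -> (forall k, L2Z (hk k)) ->
    (fun k => (\int[P]_x (((hk k (Z x) - h (Z x)) ^+ 2)%:E))%E) @ \oo --> 0%E ->
    (fun k : nat => Rintegral P setT (fun x => m x (hk k))) @ \oo
      --> (Rintegral P setT (fun x => m x h)).

Definition riesz_representer (m : T -> (ZT -> R) -> R) (Rr : ZT -> R) : Prop :=
  L2Z Rr /\
  forall h, L2Z h ->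
    Rintegral P setT (fun x => m x h) = Rintegral P setT (fun x => Rr (Z x) * h (Z x)).

Definition inner (p : nat) (theta v : 'I_p -> R) : R := \sum_(i < p) theta i * v i.
Definition l0 (p : nat) (theta : 'I_p -> R) : nat := #|[pred i : 'I_p | theta i != 0]|.

Definition Gn_param (K : R) (n p : nat) (phi : ZT -> 'I_p -> R) (s j : nat)
    (varphi : R -> R) (c : ZT -> R) (theta : 'I_p -> R) : Prop :=
  (l0 theta <= s)%N /\
  measurable_fun setT (fun x => c (Z x) - varphi (inner theta (phi (Z x)))) /\
  (\int[P]_x (((c (Z x) - varphi (inner theta (phi (Z x)))) ^+ 2)%:E)
     <= (K * ((s%:R * ln p%:R / n%:R) ^+ j))%:E)%E.

Definition in_Gn (K : R) (n p : nat) (phi : ZT -> 'I_p -> R) (s j : nat)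
    (varphi : R -> R) (c : ZT -> R) : Prop :=
  exists theta, Gn_param K n phi s j varphi c theta.

End defs.

(* With c := s log p / n, the remainder satisfies E[r^2] <= K c^2.  Domination
   and the Riesz representation give E|m(O,r)| <= E[m^‡(O,|r|)] = E[R^‡ |r|],
   so by Cauchy-Schwarz both E|S h r| and E|m(O,r)| are at most
   sqrt K * sqrt (K c^2) = K |c|.  Hence sqrt n * E|S h r + m(O,r)| is at most
   2 K |s log p / sqrt n|, which tends to 0. *)

From HB Require Import structures.
From mathcomp Require Import all_boot all_order all_algebra.
From mathcomp Require Import all_classical all_reals all_analysis.
From mathcomp Require Import ring measurable_realfun.
Set Implicit Arguments. Unset Strict Implicit. Unset Printing Implicit Defensive.
Import Order.TTheory GRing.Theory Num.Theory numFieldNormedType.Exports.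
Local Open Scope classical_set_scope.
Local Open Scope ring_scope.

Section cauchy_schwarz.
Context d (T : measurableType d) (R : realType) (mu : {measure set T -> \bar R}).

Lemma Lnorm2_le_sqrt (F : T -> R) (A : R) : 0 <= A ->
  (\int[mu]_x (F x ^+ 2)%:E <= A%:E)%E ->
  ('N[mu]_2%:E[EFin \o F] <= (Num.sqrt A)%:E)%E.
Proof.
move=> A0 FA; rewrite unlock /=.
rewrite (eq_integral (fun x => (F x ^+ 2)%:E)); last first.
  by move=> x _; rewrite -[2]/(2%:R) powR_mulrn // real_normK ?num_real.
rewrite -(powR12_sqrt A0) -poweR_EFin; apply: gt0_ler_poweR => //.
- by rewrite in_itv /= leey integral_ge0 // => x _; rewrite lee_fin sqr_ge0.
- by rewrite in_itv /= lee_fin A0 leey.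
Qed.

Lemma integral_normM_le_sqrt (F G : T -> R) (A B : R) :
  measurable_fun setT F -> measurable_fun setT G -> 0 <= A -> 0 <= B ->
  (\int[mu]_x (F x ^+ 2)%:E <= A%:E)%E -> (\int[mu]_x (G x ^+ 2)%:E <= B%:E)%E ->
  (\int[mu]_x (`|F x * G x|)%:E <= (Num.sqrt A * Num.sqrt B)%:E)%E.
Proof.
move=> mF mG A0 B0 FA GB.
have half_add_half : (2^-1 + 2^-1 = 1 :> R) by rewrite [RHS]splitr mul1r.
have := hoelder mu mF mG (ltr0Sn R 1) (ltr0Sn R 1) half_add_half.
rewrite Lnorm1 EFinM => /le_trans; apply.
apply: lee_pmul; rewrite ?Lnorm_ge0 //.
- exact: (Lnorm2_le_sqrt A0 FA).
- exact: (Lnorm2_le_sqrt B0 GB).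
Qed.

Lemma Rintegral_le_integral_normr (D : set T) (f : T -> R) :
  measurable D -> measurable_fun D f ->
  ((\int[mu]_(x in D) f x)%:E <= \int[mu]_(x in D) (`|f x|)%:E)%E.
Proof.
move=> mD mf; have mEf : measurable_fun D (EFin \o f) by exact/measurable_EFinP.
rewrite /Rintegral; case: (\int[mu]_(x in D) (f x)%:E)%E (le_abse_integral mu mD mEf).
- by move=> r /= H; apply: le_trans H; rewrite lee_fin ler_norm.
- by move=> _; apply: integral_ge0 => x _; rewrite lee_fin.
- by move=> _; apply: integral_ge0 => x _; rewrite lee_fin.
Qed.

End cauchy_schwarz.

Section dominated_functional.
Context d (T : measurableType d) (R : realType) (ZT : Type).
Variables (P : probability T R) (Z : T -> ZT).

Lemma L2Z_integral_sqr_le (g : ZT -> R) (B : R) :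
  measurable_fun setT (g \o Z) -> (\int[P]_x (g (Z x) ^+ 2)%:E <= B%:E)%E ->
  L2Z P Z g.
Proof. by move=> mg gB; split => //; exact: le_lt_trans gB (ltry _). Qed.

Lemma L2Z_normr (g : ZT -> R) : L2Z P Z g -> L2Z P Z (fun z => `|g z|).
Proof.
move=> [mg g2]; split; first exact: (measurableT_comp (@normr_measurable R setT)) mg.
rewrite (eq_integral (fun x => (g (Z x) ^+ 2)%:E)) // => x _.
by rewrite /= real_normK ?num_real.
Qed.

Lemma measurable_mean_defined (M : T -> (ZT -> R) -> R) (g : ZT -> R) :
  mean_defined P Z M -> L2Z P Z g -> measurable_fun setT (fun x => M x g).
Proof. by move=> Mmean /Mmean /integrableP[/measurable_EFinP]. Qed.

Variables (m mdd : T -> (ZT -> R) -> R) (Rdd : ZT -> R).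
Hypotheses (m_mean : mean_defined P Z m) (mdd_mean : mean_defined P Z mdd).
Hypothesis mdd_riesz : riesz_representer P Z mdd Rdd.
Hypothesis m_dominated :
  forall x g, L2Z P Z g -> `|m x g| <= mdd x (fun z => `|g z|).

Lemma integral_dominating_le_riesz (g : ZT -> R) : L2Z P Z g ->
  (\int[P]_x (mdd x (fun z => `|g z|))%:E
     <= \int[P]_x (`|Rdd (Z x) * g (Z x)|)%:E)%E.
Proof.
move=> g2; have absg2 := L2Z_normr g2.
have mabsg := absg2.1; have mRdd := mdd_riesz.1.1.
have /(integrable_fin_num measurableT) mdd_fin := mdd_mean absg2.
rewrite -(fineK mdd_fin) -/(Rintegral _ _ _) mdd_riesz.2 //.
apply: le_trans (Rintegral_le_integral_normr _ _ _) _ => //.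
  exact: measurable_funM.
apply: ge0_le_integral => //.
- by apply/measurable_EFinP/measurableT_comp/measurable_funM.
- by apply/measurable_EFinP/measurableT_comp/measurable_funM => //; case: g2.
- by move=> x _ /=; rewrite !normrM normr_id.
Qed.

Lemma integral_norm_remainder_le (f : T -> R) (g : ZT -> R) (A B : R) :
  0 <= A -> 0 <= B ->
  measurable_fun setT f -> (\int[P]_x (f x ^+ 2)%:E <= A%:E)%E ->
  (\int[P]_x (Rdd (Z x) ^+ 2)%:E <= A%:E)%E ->
  measurable_fun setT (g \o Z) -> (\int[P]_x (g (Z x) ^+ 2)%:E <= B%:E)%E ->
  (\int[P]_x (`|f x * g (Z x) + m x g|)%:E
     <= (2 * (Num.sqrt A * Num.sqrt B))%:E)%E.
Proof.
move=> A0 B0 mf fA RA mg gB.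
have g2 := L2Z_integral_sqr_le mg gB.
have mm := measurable_mean_defined m_mean g2.
have mdd_abs := measurable_mean_defined mdd_mean (L2Z_normr g2).
have mfg : measurable_fun setT (fun x => `|f x * g (Z x)|).
  exact/measurableT_comp/measurable_funM.
have triangle : (\int[P]_x (`|f x * g (Z x) + m x g|)%:E
    <= \int[P]_x (`|f x * g (Z x)|)%:E
       + \int[P]_x (mdd x (fun z => `|g z|))%:E)%E.
  rewrite -ge0_integralD //; last 3 first.
  - exact/measurable_EFinP.
  - by move=> x _; rewrite lee_fin (le_trans _ (m_dominated x g2)).
  - exact/measurable_EFinP.
  apply: ge0_le_integral => //.
  - exact/measurable_EFinP/measurableT_comp/measurable_funD/mm/measurable_funM.
  - by apply: emeasurable_funD; exact/measurable_EFinP.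
  - move=> x _; rewrite -EFinD lee_fin (le_trans (ler_normD _ _)) //.
    by rewrite lerD2l m_dominated.
apply: le_trans triangle _; rewrite mulr_natl mulr2n EFinD.
apply: leeD; first exact: integral_normM_le_sqrt.
apply: le_trans (integral_dominating_le_riesz g2) _.
exact: integral_normM_le_sqrt mdd_riesz.1.1 mg _ _ RA gB.
Qed.

End dominated_functional.

Lemma sqrt_mul_sqrt_sqr_div (R : realType) (K u x : R) : 0 <= K -> 0 < x ->
  Num.sqrt x * (Num.sqrt K * Num.sqrt (K * (u / x) ^+ 2))
    = K * `|u / Num.sqrt x|.
Proof.
move=> K0 x0; have sx0 : 0 < Num.sqrt x by rewrite sqrtr_gt0.
have xE : x = Num.sqrt x ^+ 2 by rewrite sqr_sqrtr // ltW.
have KE : K = Num.sqrt K ^+ 2 by rewrite sqr_sqrtr.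
rewrite sqrtrM // sqrtr_sqr !normrM !normfV (gtr0_norm x0) (gtr0_norm sx0).
by rewrite {2}xE {3}KE; field; rewrite gt_eqF.
Qed.

Theorem lemma9 (d : measure_display) (T : measurableType d) (R : realType) (ZT : Type)
  (K : R) (P : nat -> probability T R) (Z : T -> ZT)
  (S : nat -> T -> R) (m mdd : nat -> T -> (ZT -> R) -> R) (Rdd : nat -> ZT -> R)
  (p : nat -> nat) (phi : forall n, ZT -> 'I_(p n) -> R) (varphi : nat -> R -> R)
  (sa : nat -> nat) (a : nat -> ZT -> R) (theta : forall n, 'I_(p n) -> R)
  (h : nat -> ZT -> R) :
  0 < K ->
  (forall n, (0 < n)%N ->
     linear_as (P n) Z (m n) /\ mean_continuous (P n) Z (m n)) ->
  (forall n, (0 < n)%N ->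
     [/\ linear_pw (P n) Z (mdd n), mean_continuous (P n) Z (mdd n)
       & riesz_representer (P n) Z (mdd n) (Rdd n)]) ->
  (forall n, (0 < n)%N -> forall (x : T) (g : ZT -> R), L2Z (P n) Z g ->
     `|m n x g| <= mdd n x (fun z => `|g z|)) ->
  (forall n, (0 < n)%N -> (\int[P n]_x ((Rdd n (Z x)) ^+ 2)%:E <= K%:E)%E) ->
  (forall n, (0 < n)%N ->
     Gn_param (P n) Z K n (phi n) (sa n) 2 (varphi n) (a n) (theta n)) ->
  (fun n : nat => (sa n)%:R * ln ((p n)%:R : R) / Num.sqrt (n%:R : R)) @ \oo --> (0 : R) ->
  (forall n, (0 < n)%N ->
     measurable_fun setT (fun x => S n x * h n (Z x)) /\
     (\int[P n]_x ((S n x * h n (Z x)) ^+ 2)%:E <= K%:E)%E) ->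
  let r n z := a n z - varphi n (inner (theta n) (phi n z)) in
  (fun n => ((Num.sqrt (n%:R : R))%:E *
     \int[P n]_x (`|S n x * h n (Z x) * r n (Z x) + m n x (r n)|)%:E)%E)
    @ \oo --> 0%E.
Proof.
move=> K0 m_props mdd_props m_dominated Rdd_sq a_param rate Sh_props r.
set e := fun n : nat => (sa n)%:R * ln ((p n)%:R : R) / Num.sqrt (n%:R : R).
apply: (squeeze_cvge (f := fun=> 0%E) (h := fun n => (2 * (K * `|e n|))%:E)).
- near=> n.
  have n0 : (0 < n)%N by near: n; exact: nbhs_infty_gt.
  have [[_ [m_mean _]] [_ [mdd_mean _] mdd_riesz]] := (m_props n n0, mdd_props n n0).
  have [_ [mr r_sq]] := a_param n n0.
  have [mSh Sh_sq] := Sh_props n n0.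
  have sqrt_n_ge0 : (0 <= (Num.sqrt (n%:R : R))%:E)%E by rewrite lee_fin sqrtr_ge0.
  rewrite mule_ge0 ?integral_ge0 //=.
  have := integral_norm_remainder_le (g := r n) m_mean mdd_mean mdd_riesz
    (m_dominated n n0) (ltW K0) (mulr_ge0 (ltW K0) (sqr_ge0 _))
    mSh Sh_sq (Rdd_sq n n0) mr r_sq.
  move=> /(lee_wpmul2l sqrt_n_ge0) /le_trans; apply.
  by rewrite -EFinM lee_fin mulrCA sqrt_mul_sqrt_sqr_div ?ltr0n ?(ltW K0).
- exact: cvg_cst.
- apply: cvg_EFin; first by near=> n.
  rewrite -(mulr0 2) -(mulr0 K).
  apply: cvgM; first exact: cvg_cst.
  apply: cvgM; first exact: cvg_cst.
  by apply/norm_cvg0P.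
Unshelve. all: end_near.
Qed.
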